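(* Let $V\subset\mathbb{R}^n$ be starlike with respect to the origin, let $a\in V$, let $k\in\mathbb{N}$, let $P_k$ be a homogeneous polynomial of degree $k$ on $\mathbb{R}^n$, and let $L\ge0$. If $|P_k(v)|\le L$ for all $v\in a+V$, then $|P_k(v)|\le L$ for all $v\in\frac{1}{2e}V$.
   Context: $V$ starlike with respect to the origin means $sv\in V$ for all $v\in V$ and $s\in[0,1]$. $a+V=\{a+v: v\in V\}$ and $\lambda V=\{\lambda v: v\in V\}$. *)

From mathcomp Require Import all_boot.
From Stdlib Require Import Reals List.

Definition vec (n : nat) : Type := 'I_n -> R.

Definition starlike {n : nat} (V : vec n -> Prop) : Prop :=
  forall (v : vec n) (s : R), V v -> (0 <= s <= 1)%R -> V (fun i => (s * v i)%R).

Definition monomial {n : nat} (alpha : 'I_n -> nat) (x : vec n) : R :=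
  \big[Rmult/1%R]_(i < n) (x i ^ alpha i)%R.

Definition homogeneous_poly {n : nat} (k : nat) (P : vec n -> R) : Prop :=
  exists ms : list (R * ('I_n -> nat)),
    (forall m, List.In m ms -> (\sum_(i < n) (snd m) i)%N = k) /\
    (forall x : vec n,
       P x = List.fold_right (fun m acc => (fst m * monomial (snd m) x + acc)%R) 0%R ms).

From mathcomp Require Import all_boot.
From Stdlib Require Import Reals Factorial Lra Lia FunctionalExtensionality.
Open Scope R_scope.

(* Proof idea (finite differences along a line).
   Fix w in V and put u = w / (2e).  The function f t = P(a + t u) is a
   real polynomial of degree <= k whose coefficient of t^k is P(u), because
   P is homogeneous of degree k.  Hence for every step h the k-th forward
   difference of f is the constant k! h^k P(u).  On the other hand that
   difference is a signed sum of 2^k values of f taken among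
   f(0), f(h), ..., f(kh); with h = 2e/k all points a + jh u = a + (j/k) w
   lie in a + V (V is starlike), so |k! h^k P(u)| <= 2^k L.  Finally
   k^k <= k! e^k gives 2^k <= k! h^k, whence |P(u)| <= L. *)

Definition fdiff (h : R) (f : R -> R) : R -> R := fun t => f (t + h) - f t.

Fixpoint fdiff_iter (h : R) (m : nat) (f : R -> R) : R -> R :=
  match m with O => f | S m => fdiff_iter h m (fdiff h f) end.

(* The m-th difference at t only sees f at t, t + h, ..., t + mh, and each
   difference at most doubles a uniform bound. *)
Lemma fdiff_iter_bound (h : R) (m : nat) : forall (L : R) (f : R -> R) (t : R),
  (forall j, (j <= m)%coq_nat -> Rabs (f (t + INR j * h)) <= L) ->
  Rabs (fdiff_iter h m f t) <= 2 ^ m * L.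
Proof.
induction m as [|m IH]; intros L f t Hf; simpl.
- specialize (Hf O (le_n 0)). simpl in Hf.
  replace (t + 0 * h) with t in Hf by ring. lra.
- replace (2 * 2 ^ m * L) with (2 ^ m * (2 * L)) by ring.
  apply IH. intros j Hj. unfold fdiff.
  pose proof (Hf (S j) ltac:(lia)) as Hnext. pose proof (Hf j ltac:(lia)) as Hcur.
  rewrite S_INR in Hnext.
  replace (t + (INR j + 1) * h) with (t + INR j * h + h) in Hnext by ring.
  unfold Rminus. eapply Rle_trans; [apply Rabs_triang|]. rewrite Rabs_Ropp. lra.
Qed.

(* [has_lead d c f]: f is a polynomial function of degree <= d whose
   coefficient of t^d is c.  This avoids any explicit coefficient bookkeeping. *)
Fixpoint has_lead (d : nat) (c : R) (f : R -> R) : Prop :=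
  match d with
  | O => forall t, f t = c
  | S d' => forall h, has_lead d' (INR (S d') * c * h) (fdiff h f)
  end.

Lemma fdiff_iter_lead (h : R) (d : nat) : forall (c : R) (f : R -> R) (t : R),
  has_lead d c f -> fdiff_iter h d f t = INR (fact d) * h ^ d * c.
Proof.
induction d as [|d IH]; intros c f t H; simpl fdiff_iter.
- rewrite H. simpl. ring.
- rewrite (IH _ _ t (H h)) fact_simpl mult_INR. simpl pow. ring.
Qed.

Lemma has_lead_ext (d : nat) : forall (c : R) (f g : R -> R),
  (forall t, f t = g t) -> has_lead d c f -> has_lead d c g.
Proof.
induction d as [|d IH]; intros c f g E H.
- intro t. rewrite <- E. apply H.
- intro h. apply (IH _ (fdiff h f)); [|apply H].
  intro t. unfold fdiff. rewrite !E. reflexivity.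
Qed.

Lemma has_lead_coef (d : nat) (c c' : R) (f : R -> R) :
  c = c' -> has_lead d c f -> has_lead d c' f.
Proof. intros <-; auto. Qed.

Lemma has_lead_const (c : R) : has_lead 0 c (fun _ => c).
Proof. intro t. reflexivity. Qed.

Lemma has_lead_zero (d : nat) : has_lead d 0 (fun _ => 0).
Proof.
induction d as [|d IH]; [intro t; reflexivity|].
intro h. apply (has_lead_coef d 0); [ring|].
apply (has_lead_ext d 0 (fun _ => 0)); [intro t; unfold fdiff; ring|exact IH].
Qed.

Lemma has_lead_add (d : nat) : forall (c1 c2 : R) (f g : R -> R),
  has_lead d c1 f -> has_lead d c2 g -> has_lead d (c1 + c2) (fun t => f t + g t).
Proof.
induction d as [|d IH]; intros c1 c2 f g H1 H2.
- intro t. rewrite H1 H2. reflexivity.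
- intro h. eapply has_lead_coef; [|eapply has_lead_ext; [|apply (IH _ _ _ _ (H1 h) (H2 h))]].
  + ring.
  + intro t. unfold fdiff. ring.
Qed.

Lemma has_lead_scal (r : R) (d : nat) : forall (c : R) (f : R -> R),
  has_lead d c f -> has_lead d (r * c) (fun t => r * f t).
Proof.
induction d as [|d IH]; intros c f H.
- intro t. rewrite H. reflexivity.
- intro h. eapply has_lead_coef; [|eapply has_lead_ext; [|apply (IH _ _ (H h))]].
  + ring.
  + intro t. unfold fdiff. ring.
Qed.

Lemma has_lead_shift (s : R) (d : nat) : forall (c : R) (f : R -> R),
  has_lead d c f -> has_lead d c (fun t => f (t + s)).
Proof.
induction d as [|d IH]; intros c f H.
- intro t. apply H.
- intro h. eapply has_lead_ext; [|apply (IH _ _ (H h))].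
  intro t. unfold fdiff. do 2 f_equal; ring.
Qed.

(* Degrees add and leading coefficients multiply.  The induction is on the
   total degree, using the discrete Leibniz rule
   fdiff h (f g) t = fdiff h f t * g (t + h) + f t * fdiff h g t. *)
Lemma has_lead_mul (N : nat) : forall (d1 d2 : nat) (c1 c2 : R) (f g : R -> R),
  (d1 + d2)%coq_nat = N -> has_lead d1 c1 f -> has_lead d2 c2 g ->
  has_lead N (c1 * c2) (fun t => f t * g t).
Proof.
induction N as [|N IH]; intros d1 d2 c1 c2 f g E H1 H2.
- destruct d1, d2; try (simpl in E; lia).
  intro t. simpl in H1, H2. rewrite H1 H2. reflexivity.
- destruct d1 as [|e1].
  + simpl in E. subst d2. eapply has_lead_ext; [|apply (has_lead_scal c1 _ _ _ H2)].
    intro t. simpl in H1. rewrite H1. reflexivity.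
  + destruct d2 as [|e2].
    * assert (e1 = N) by lia. subst N.
      eapply has_lead_coef; [|eapply has_lead_ext; [|apply (has_lead_scal c2 _ _ _ H1)]].
      -- ring.
      -- intro t. simpl in H2. rewrite H2. ring.
    * intro h.
      assert (Hleft := IH e1 (S e2) _ _ _ _ ltac:(lia) (H1 h) (has_lead_shift h _ _ _ H2)).
      assert (Hright := IH (S e1) e2 _ _ _ _ ltac:(lia) H1 (H2 h)).
      assert (ES : S N = (S e1 + S e2)%coq_nat) by lia.
      eapply has_lead_coef; [|eapply has_lead_ext; [|apply (has_lead_add _ _ _ _ _ Hleft Hright)]].
      -- rewrite ES plus_INR. ring.
      -- intro t. unfold fdiff. ring.
Qed.

Lemma has_lead_affine (b v : R) : has_lead 1 v (fun t => b + t * v).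
Proof. intros h t. unfold fdiff. simpl. ring. Qed.

Lemma has_lead_pow (v : R) (f : R -> R) :
  has_lead 1 v f -> forall m, has_lead m (v ^ m) (fun t => f t ^ m).
Proof.
intros H m. induction m as [|m IH]; [intro t; reflexivity|].
exact (has_lead_mul (S m) 1 m _ _ _ _ erefl H IH).
Qed.

Lemma has_lead_monomial_line (n : nat) (alpha : 'I_n -> nat) (a v : vec n) :
  forall s : seq 'I_n,
  has_lead (\sum_(i <- s) alpha i)%N (\big[Rmult/1]_(i <- s) (v i ^ alpha i))
    (fun t => \big[Rmult/1]_(i <- s) ((a i + t * v i) ^ alpha i)).
Proof.
elim=> [|i s IH].
- rewrite !big_nil. eapply has_lead_ext; [|apply (has_lead_const 1)].
  intro t. rewrite big_nil. reflexivity.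
- rewrite !big_cons.
  eapply has_lead_ext; [|exact (has_lead_mul _ _ _ _ _ _ _ erefl
                           (has_lead_pow _ _ (has_lead_affine (a i) (v i)) (alpha i)) IH)].
  intro t. rewrite big_cons. reflexivity.
Qed.

Lemma has_lead_homogeneous_line (n k : nat) (P : vec n -> R) (a v : vec n) :
  homogeneous_poly k P -> has_lead k (P v) (fun t => P (fun i => a i + t * v i)).
Proof.
intros [ms [Hdeg HP]].
rewrite HP. eapply has_lead_ext; [intro t; rewrite HP; reflexivity|]. clear HP.
induction ms as [|m ms IH]; simpl.
- apply has_lead_zero.
- apply has_lead_add.
  + apply has_lead_scal. unfold monomial.
    rewrite <- (Hdeg m (or_introl erefl)). apply has_lead_monomial_line.
  + apply IH. intros m' Hm'. apply Hdeg. right. exact Hm'.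
Qed.

Lemma lead_coeff_bound (k : nat) (c : R) (f : R -> R) (L h : R) :
  0 <= h -> has_lead k c f ->
  (forall t, 0 <= t <= INR k * h -> Rabs (f t) <= L) ->
  INR (fact k) * h ^ k * Rabs c <= 2 ^ k * L.
Proof.
intros Hh Hf Hbd.
assert (Hdiff := fdiff_iter_bound h k L f 0).
rewrite (fdiff_iter_lead h k c f 0 Hf) in Hdiff.
rewrite Rabs_mult (Rabs_right (INR (fact k) * h ^ k)) in Hdiff.
- apply Hdiff. intros j Hj. apply Hbd.
  assert (Hjk : INR j <= INR k) by (apply le_INR; exact Hj).
  pose proof (pos_INR j). split; nra.
- apply Rle_ge, Rmult_le_pos; [apply pos_INR|apply pow_le; exact Hh].
Qed.

Lemma exp_pow (x : R) (m : nat) : exp x ^ m = exp (INR m * x).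
Proof.
induction m as [|m IH]; simpl pow.
- rewrite Rmult_0_l exp_0. reflexivity.
- rewrite IH S_INR -exp_plus. f_equal. ring.
Qed.

(* (1 + 1/x)^x <= e for x > 0 integer, in the form (x + 1)^x <= e x^x. *)
Lemma succ_pow_le_exp (k : nat) : (INR k + 1) ^ k <= exp 1 * INR k ^ k.
Proof.
destruct k as [|k]; [simpl; pose proof (exp_ineq1_le 1); lra|].
set (x := INR (S k)).
assert (Hx : 0 < x) by (apply lt_0_INR; lia).
replace (x + 1) with (x * (1 + / x)) by (field; lra).
rewrite Rpow_mult_distr Rmult_comm. apply Rmult_le_compat_r; [apply pow_le; lra|].
replace (exp 1) with (exp (/ x) ^ S k).
- apply pow_incr. split; [pose proof (Rinv_0_lt_compat x Hx); lra|apply exp_ineq1_le].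
- rewrite exp_pow. f_equal. fold x. field. lra.
Qed.

Lemma pow_self_le_fact_exp (k : nat) : INR k ^ k <= INR (fact k) * exp 1 ^ k.
Proof.
induction k as [|k IH]; [simpl; lra|].
rewrite S_INR fact_simpl mult_INR S_INR. simpl pow.
pose proof (succ_pow_le_exp k) as Hstep.
pose proof (pos_INR k). pose proof (exp_pos 1).
apply Rle_trans with ((INR k + 1) * (exp 1 * INR k ^ k)); [apply Rmult_le_compat_l; lra|].
replace ((INR k + 1) * INR (fact k) * (exp 1 * exp 1 ^ k))
  with ((INR k + 1) * (exp 1 * (INR (fact k) * exp 1 ^ k))) by ring.
apply Rmult_le_compat_l; [lra|]. apply Rmult_le_compat_l; lra.
Qed.

(* With the step h = 2e/k, the factor k! h^k of the k-th difference beats the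
   2^k lost in [fdiff_iter_bound]. *)
Lemma two_pow_le_fact_step (k : nat) : 2 ^ k <= INR (fact k) * (2 * exp 1 / INR k) ^ k.
Proof.
destruct k as [|k]; [simpl; lra|].
assert (Hk : 0 < INR (S k)) by (apply lt_0_INR; lia).
unfold Rdiv. rewrite !Rpow_mult_distr.
pose proof (pow_self_le_fact_exp (S k)) as Hfact.
assert (Hinv : INR (S k) ^ S k * (/ INR (S k)) ^ S k = 1).
{ rewrite -Rpow_mult_distr Rinv_r; [apply pow1|lra]. }
assert (0 <= (/ INR (S k)) ^ S k) by (apply pow_le; left; apply Rinv_0_lt_compat; lra).
assert (0 <= 2 ^ S k) by (apply pow_le; lra).
apply Rle_trans with (2 ^ S k * (INR (S k) ^ S k * (/ INR (S k)) ^ S k)); [rewrite Hinv; lra|].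
replace (INR (fact (S k)) * (2 ^ S k * exp 1 ^ S k * (/ INR (S k)) ^ S k))
  with (2 ^ S k * ((INR (fact (S k)) * exp 1 ^ S k) * (/ INR (S k)) ^ S k)) by ring.
apply Rmult_le_compat_l; [lra|]. apply Rmult_le_compat_r; lra.
Qed.

(* The grid step 2e/k is nonnegative and k steps stay within [0, 2e]
   (for k = 0 the step is 2e * /0 = 0). *)
Lemma step_nonneg (T : R) (k : nat) : 0 <= T -> 0 <= T / INR k.
Proof.
intro HT. destruct k as [|k].
- unfold Rdiv. rewrite Rinv_0. lra.
- apply Rmult_le_pos; [lra|]. left. apply Rinv_0_lt_compat, lt_0_INR. lia.
Qed.

Lemma step_span (T : R) (k : nat) : 0 <= T -> INR k * (T / INR k) <= T.
Proof.
intro HT. destruct k as [|k]; [simpl; lra|].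
right. field. apply not_0_INR. lia.
Qed.

Theorem lemma3p5 (n : nat) (V : vec n -> Prop) (a : vec n) (k : nat)
    (P : vec n -> R) (L : R) :
  starlike V -> V a -> homogeneous_poly k P -> (0 <= L)%R ->
  (forall w : vec n, V w -> (Rabs (P (fun i => a i + w i)) <= L)%R) ->
  forall w : vec n, V w ->
    (Rabs (P (fun i => / (2 * exp 1) * w i)) <= L)%R.
Proof.
intros Hstar _ Hhom HL Hbd w Hw.
assert (He : 0 < 2 * exp 1) by (pose proof (exp_pos 1); lra).
set (u := fun i => / (2 * exp 1) * w i).
set (h := 2 * exp 1 / INR k).
(* On the line t |-> a + t u, points with 0 <= t <= 2e lie in a + V. *)
assert (Hline : forall t, 0 <= t <= INR k * h ->
                  Rabs (P (fun i => a i + t * u i)) <= L).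
{ intros t Ht. pose proof (step_span (2 * exp 1) k ltac:(lra)) as Hspan. fold h in Hspan.
  replace (fun i => a i + t * u i)
    with (fun i => a i + (fun j => t / (2 * exp 1) * w j) i).
  - apply Hbd, Hstar; [exact Hw|].
    split; [apply Rmult_le_pos; [lra|left; apply Rinv_0_lt_compat; lra]|].
    apply Rmult_le_reg_r with (2 * exp 1); [lra|]. unfold Rdiv.
    rewrite Rmult_assoc Rinv_l; lra.
  - apply functional_extensionality. intro i. unfold u. field. lra. }
pose proof (lead_coeff_bound k (P u) _ L h (step_nonneg (2 * exp 1) k ltac:(lra))
              (has_lead_homogeneous_line n k P a u Hhom) Hline) as Hlead.
pose proof (two_pow_le_fact_step k) as Hfact. fold h in Hfact.
pose proof (Rabs_pos (P u)). pose proof (pow_lt 2 k ltac:(lra)).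
apply (Rmult_le_reg_l (2 ^ k)); [lra|]. nra.
Qed.
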